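(* Suppose the standing assumptions (1)–(5) below hold. Let the updated dataset $\mathcal{D}'=(\mathbf{Z}',\mathbf{y})$ arise from $\mathcal{D}$ by any single or batch removal request, each request being either a feature removal (zeroing the entry of a node in some $\mathbf{x}_i$) or an entire node removal (zeroing that entry of $\mathbf{x}_i$ and the corresponding row and column of $\mathbf{S}_i$), with the embeddings of affected graphs recomputed by the GST and all other embeddings unchanged. Then the updated model $\mathbf{w}'=\mathbf{w}^\star+\mathbf{H}_{\mathbf{w}^\star}^{-1}\Delta$ satisfies $$\|\nabla L(\mathbf{w}',\mathcal{D}')\|\leq\gamma_2F\,\|\mathbf{Z}'\|\,\|\mathbf{H}_{\mathbf{w}^\star}^{-1}\Delta\|\,\|\mathbf{Z}'\mathbf{H}_{\mathbf{w}^\star}^{-1}\Delta\|,\qquad F=\sqrt{\sum_{l=0}^{L-1}B^{2l}},$$ where $\mathbf{Z}'$ is the data matrix of $\mathcal{D}'$ and $B$ is the upper frame constant of the graph wavelets used in the GST.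
   Context: Setting (graph classification). There are $n$ training graphs $\mathcal{G}_1,\dots,\mathcal{G}_n$. Graph $\mathcal{G}_i$ has $g_i$ nodes, a symmetric adjacency matrix $\mathbf{S}_i\in\mathbb{R}^{g_i\times g_i}$ (the graph shift operator), a node signal $\mathbf{x}_i\in\mathbb{R}^{g_i}$ (one scalar feature per node) and a label $y_i$. Graph scattering transform (GST). Fix positive integers $J,L$ and wavelet kernel functions $h_1,\dots,h_J:\mathbb{R}\to\mathbb{R}$. For a symmetric $\mathbf{S}=\mathbf{V}\mathbf{\Lambda}\mathbf{V}^T$ with eigenvalues $\lambda_1,\dots,\lambda_g$, set $\mathbf{H}_j(\mathbf{S})=\mathbf{V}\,\mathrm{diag}(h_j(\lambda_1),\dots,h_j(\lambda_g))\mathbf{V}^T$. The wavelets form a frame: there are constants $0<A\le B$ with $A^2\|\mathbf{x}\|^2\le\sum_{j=1}^J\|\mathbf{H}_j(\mathbf{S})\mathbf{x}\|^2\le B^2\|\mathbf{x}\|^2$ for all $\mathbf{x}$ (for all shift operators considered). Let $\rho$ be the entrywise absolute value. For a path $p=(j_1,\dots,j_l)$ with $j_k\in\{1,\dots,J\}$ and $0\le l\le L-1$, define $\Phi_{()}(\mathbf{S},\mathbf{x})=\mathbf{x}$ and $\Phi_{(j_1,\dots,j_l)}(\mathbf{S},\mathbf{x})=\rho\big(\mathbf{H}_{j_l}(\mathbf{S})\Phi_{(j_1,\dots,j_{l-1})}(\mathbf{S},\mathbf{x})\big)$, and the scalar coefficient $\phi_p(\mathbf{S},\mathbf{x})=U\Phi_p(\mathbf{S},\mathbf{x})$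 with the averaging operator $U=\frac{1}{g}\mathbf{1}^T$ ($g$ the number of nodes). The embedding $\Phi(\mathbf{S},\mathbf{x})\in\mathbb{R}^d$, $d=\sum_{l=0}^{L-1}J^l$, is the concatenation of all $\phi_p(\mathbf{S},\mathbf{x})$. Set $\mathbf{z}_i=\Phi(\mathbf{S}_i,\mathbf{x}_i)$, let $\mathbf{Z}\in\mathbb{R}^{n\times d}$ have rows $\mathbf{z}_i^T$, and $\mathcal{D}=(\mathbf{Z},\mathbf{y})$. Learning and update. $\ell(s,y)$ is convex and twice differentiable in $s$; $\ell'$, $\ell''$ denote derivatives in $s$, and $\nabla$, $\nabla^2$ denote gradient/Hessian in $\mathbf{w}$. For a dataset $\mathcal{D}=(\mathbf{Z},\mathbf{y})$, $L(\mathbf{w},\mathcal{D})=\sum_{i=1}^n\big(\ell(\mathbf{w}^T\mathbf{z}_i,y_i)+\frac{\lambda}{2}\|\mathbf{w}\|^2\big)$ with $\lambda>0$, and $\mathbf{w}^\star=\arg\min_{\mathbf{w}}L(\mathbf{w},\mathcal{D})$. For the updated dataset $\mathcal{D}'$, set $\mathbf{H}_{\mathbf{w}^\star}=\nabla^2L(\mathbf{w}^\star,\mathcal{D}')$ and $\Delta=\nabla L(\mathbf{w}^\star,\mathcal{D})-\nabla L(\mathbf{w}^\star,\mathcal{D}')$. Norms are $\ell_2$ for vectors and operator norm for matrices. Standing assumptions: there are constants $C_1,C_2,\gamma_1,\gamma_2$ such that for every embedding $\mathbf{z}_i$ (of $\mathcal{D}$ or $\mathcal{D}'$) and every $\mathbf{w}\in\mathbb{R}^d$: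 (1) $\|\nabla\ell(\mathbf{w}^T\mathbf{z}_i,y_i)\|\le C_1$; (2) $|\ell'(\mathbf{w}^T\mathbf{z}_i,y_i)|\le C_2$; (3) $\ell'$ is $\gamma_1$-Lipschitz; (4) $\ell''$ is $\gamma_2$-Lipschitz; (5) the signals (before and after removal) satisfy $|[\mathbf{x}_i]_j|\le1$ for all $i$ and all $j\in\{1,\dots,g_i\}$. *)

From HB Require Import structures.
From mathcomp Require Import all_boot all_order all_algebra.
From mathcomp Require Import all_classical all_reals all_analysis.
Set Implicit Arguments. Unset Strict Implicit. Unset Printing Implicit Defensive.
Import Order.TTheory GRing.Theory Num.Theory.
Import numFieldNormedType.Exports.
Local Open Scope classical_set_scope.
Local Open Scope ring_scope.

Section GST.
Variable R : realType.

Definition vnorm m (v : 'cV[R]_m) : R := Num.sqrt (\sum_(k < m) v k 0 ^+ 2).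

Definition dot m (u v : 'cV[R]_m) : R := \sum_(k < m) u k 0 * v k 0.

Definition opnorm m k (A : 'M[R]_(m, k)) : R :=
  sup [set vnorm (A *m v) | v in [set v : 'cV[R]_k | vnorm v <= 1]].

Definition grad d (f : 'cV[R]_d -> R) (w : 'cV[R]_d) : 'cV[R]_d :=
  \col_(k < d) derive f w (delta_mx k 0).
Definition hess d (f : 'cV[R]_d -> R) (w : 'cV[R]_d) : 'M[R]_d :=
  \matrix_(k < d, m < d)
     derive (fun u => derive f u (delta_mx m 0)) w (delta_mx k 0).

Definition spec_decomp g (S V : 'M[R]_g) (lam : 'rV[R]_g) : Prop :=
  V^T *m V = 1%:M /\ S = V *m diag_mx lam *m V^T.

Definition wav g (h : R -> R) (V : 'M[R]_g) (lam : 'rV[R]_g) : 'M[R]_g :=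
  V *m diag_mx (\row_k h (lam 0 k)) *m V^T.

(** Scattering paths (j_1,...,j_l), 0 <= l <= L-1, j_k in {1..J} (here 'I_J). *)
Definition pathT (J L : nat) := {l : 'I_L & l.-tuple 'I_J}.

Definition Phi g J (hs : 'I_J -> R -> R) (V : 'M[R]_g) (lam : 'rV[R]_g)
    (x : 'cV[R]_g) (p : seq 'I_J) : 'cV[R]_g :=
  foldl (fun acc j => map_mx (fun r => `|r|) (wav (hs j) V lam *m acc)) x p.

Definition phi g J (hs : 'I_J -> R -> R) (V : 'M[R]_g) (lam : 'rV[R]_g)
    (x : 'cV[R]_g) (p : seq 'I_J) : R :=
  (g%:R)^-1 * \sum_(v < g) Phi hs V lam x p v 0.

(** Embedding dimension d = #paths = sum_(l<L) J^l. *)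
Definition gdim (J L : nat) : nat := #|predT : pred (pathT J L)|.

Definition gst g J L (hs : 'I_J -> R -> R) (V : 'M[R]_g) (lam : 'rV[R]_g)
    (x : 'cV[R]_g) : 'cV[R]_(gdim J L) :=
  \col_k phi hs V lam x (tval (tagged (@enum_val (pathT J L) predT k))).

Definition datamx n d (z : 'I_n -> 'cV[R]_d) : 'M[R]_(n, d) :=
  \matrix_(i < n, k < d) z i k 0.

Definition Loss (Y : Type) n d (l : R -> Y -> R) (lambda : R)
    (z : 'I_n -> 'cV[R]_d) (y : 'I_n -> Y) (w : 'cV[R]_d) : R :=
  \sum_(i < n) (l (dot w (z i)) (y i) + lambda / 2 * vnorm w ^+ 2).

(** Removal requests on one graph: [F] = nodes whose feature is zeroed,
    [N] = nodes removed (feature zeroed and row/column of S zeroed). *)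
Definition remove_x g (F N : {set 'I_g}) (x : 'cV[R]_g) : 'cV[R]_g :=
  \col_j (if j \in F :|: N then 0 else x j 0).
Definition remove_S g (N : {set 'I_g}) (S : 'M[R]_g) : 'M[R]_g :=
  \matrix_(a, b) (if (a \in N) || (b \in N) then 0 else S a b).

End GST.

From HB Require Import structures.
From mathcomp Require Import all_boot all_order all_algebra.
From mathcomp Require Import all_classical all_reals all_analysis.
From mathcomp Require Import ring lra.
Set Implicit Arguments. Unset Strict Implicit. Unset Printing Implicit Defensive.
Import Order.TTheory GRing.Theory Num.Theory.
Import numFieldNormedType.Exports.
Local Open Scope ring_scope.

(* The Newton step is exact up to second order.  Since w* minimizes L(., D), the
   gradient of L(., D) vanishes at w*, so Delta = - grad L(w*, D') and v = H^-1 Delta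
   solves H v = - grad L(w*, D'); H is invertible because convexity makes l'' >= 0.
   Expanding grad L(., D') = sum_i l'(w^T z'_i) z'_i + n lambda w along v then leaves
   only grad L(w', D') = Z'^T r with r_i = l'(a_i + h_i) - l'(a_i) - l''(a_i) h_i,
   h_i = v^T z'_i, and the mean value theorem with the Lipschitz bound on l'' gives
   |r_i| <= gamma2 h_i^2 <= gamma2 ||v|| ||z'_i|| |h_i|.  Finally ||z'_i|| <= F: the
   upper frame bound makes the energy of the l-th scattering layer at most
   B^(2l) ||x||^2, averaging over the g nodes divides it by g, and ||x||^2 <= g. *)

Section Euclidean.
Variable R : realType.
Implicit Types (m k : nat).

Lemma sum_mul_sqr_le m (a b : 'I_m -> R) :
  (\sum_i a i * b i) ^+ 2 <= (\sum_i a i ^+ 2) * (\sum_i b i ^+ 2).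
Proof.
have lagrange : \sum_i \sum_j (a i * b j - a j * b i) ^+ 2 =
    2 * ((\sum_i a i ^+ 2) * (\sum_i b i ^+ 2) - (\sum_i a i * b i) ^+ 2).
  have -> : forall x y z : R, 2 * (x * y - z ^+ 2) = x * y + y * x - 2 * (z * z).
    by move=> x y z; ring.
  rewrite !big_distrl /= mulr_sumr -sumrN -!big_split /=.
  apply: eq_bigr => i _; rewrite !big_distrr /= -sumrN -!big_split /=.
  by apply: eq_bigr => j _ /=; ring.
have : 0 <= \sum_i \sum_j (a i * b j - a j * b i) ^+ 2.
  by apply: sumr_ge0 => i _; apply: sumr_ge0 => j _; exact: sqr_ge0.
by rewrite lagrange pmulr_rge0 // subr_ge0.
Qed.

Lemma dotC m (u v : 'cV[R]_m) : dot u v = dot v u.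
Proof. by apply: eq_bigr => k _; rewrite mulrC. Qed.

Lemma dotDl m (u v w : 'cV[R]_m) : dot (u + v) w = dot u w + dot v w.
Proof. by rewrite /dot -big_split; apply: eq_bigr => k _; rewrite mxE mulrDl. Qed.

Lemma dotZl m (a : R) (u v : 'cV[R]_m) : dot (a *: u) v = a * dot u v.
Proof. by rewrite /dot mulr_sumr; apply: eq_bigr => k _; rewrite mxE mulrA. Qed.

Lemma dot_delta m (k : 'I_m) (u : 'cV[R]_m) : dot (delta_mx k 0) u = u k 0.
Proof.
rewrite /dot (bigD1 k) //= big1 => [|j /negbTE jk]; rewrite !mxE ?eqxx ?jk /=.
  by rewrite mul1r addr0.
by rewrite mul0r.
Qed.

Lemma dot_trmx m k (M : 'M[R]_(m, k)) (u : 'cV[R]_k) (v : 'cV[R]_m) :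
  dot u (M^T *m v) = dot (M *m u) v.
Proof.
rewrite /dot; under eq_bigr do rewrite mxE mulr_sumr.
under [RHS]eq_bigr do rewrite mxE mulr_suml.
rewrite exchange_big; apply: eq_bigr => i _; apply: eq_bigr => j _.
by rewrite mxE mulrCA mulrA.
Qed.

Lemma vnorm_ge0 m (u : 'cV[R]_m) : 0 <= vnorm u.
Proof. exact: sqrtr_ge0. Qed.

Lemma vnorm_sqr m (u : 'cV[R]_m) : vnorm u ^+ 2 = \sum_k u k 0 ^+ 2.
Proof. by rewrite sqr_sqrtr // sumr_ge0 // => k _; rewrite sqr_ge0. Qed.

Lemma dot_self m (u : 'cV[R]_m) : dot u u = vnorm u ^+ 2.
Proof. by rewrite vnorm_sqr; apply: eq_bigr => k _; rewrite expr2. Qed.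

Lemma vnorm0 m : vnorm (0 : 'cV[R]_m) = 0.
Proof. by rewrite /vnorm big1 ?sqrtr0 // => k _; rewrite mxE expr0n. Qed.

Lemma vnorm_eq0 m (u : 'cV[R]_m) : (vnorm u == 0) = (u == 0).
Proof.
apply/idP/eqP => [|->]; last by rewrite vnorm0.
rewrite sqrtr_eq0 => u_le0; apply/matrixP => k j; rewrite (ord1 j) mxE.
have u_eq0 : \sum_k u k 0 ^+ 2 = 0.
  by apply/eqP; rewrite eq_le u_le0 sumr_ge0 // => i _; rewrite sqr_ge0.
have /eqP := @psumr_eq0P _ _ _ _ (fun i _ => sqr_ge0 (u i 0)) u_eq0 k isT.
by rewrite sqrf_eq0 => /eqP.
Qed.

Lemma vnormZ m (a : R) (u : 'cV[R]_m) : vnorm (a *: u) = `|a| * vnorm u.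
Proof.
rewrite /vnorm -sqrtr_sqr -sqrtrM ?sqr_ge0 // mulr_sumr.
by congr Num.sqrt; apply: eq_bigr => k _; rewrite mxE exprMn.
Qed.

Lemma vnorm_map_normr m (u : 'cV[R]_m) : vnorm (map_mx (fun r => `|r|) u) = vnorm u.
Proof. by congr Num.sqrt; apply: eq_bigr => k _; rewrite mxE real_normK ?num_real. Qed.

Lemma normr_dot_le m (u v : 'cV[R]_m) : `|dot u v| <= vnorm u * vnorm v.
Proof.
rewrite -sqrtr_sqr /vnorm -sqrtrM ?sumr_ge0 // => [|k _]; last exact: sqr_ge0.
exact/ler_wsqrtr/sum_mul_sqr_le.
Qed.

Lemma vnorm_le_pointwise m (u v : 'cV[R]_m) (c : R) :
  (forall i, `|u i 0| <= c * `|v i 0|) -> vnorm u <= c * vnorm v.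
Proof.
move=> le_uv; have [c_ge0 | c_lt0] := leP 0 c.
  rewrite -[c]ger0_norm // -vnormZ; apply: ler_wsqrtr; apply: ler_sum => i _.
  rewrite mxE -(real_normK (num_real (u i 0))) -(real_normK (num_real (_ * _))).
  by rewrite normrM (ger0_norm c_ge0) !expr2 ler_pM.
(* with c < 0 the hypothesis forces u = v = 0 *)
have entry0 (w : 'cV[R]_m) : (forall i, `|w i 0| <= 0) -> w = 0.
  move=> w_le0; apply/matrixP => i j; rewrite (ord1 j) mxE.
  by apply/normr0_eq0/eqP; rewrite eq_le normr_ge0 w_le0.
have v0 : v = 0.
  apply: entry0 => i; rewrite -(ler_nM2l c_lt0) mulr0.
  exact: le_trans (normr_ge0 _) (le_uv i).
have u0 : u = 0 by apply: entry0 => i; rewrite (le_trans (le_uv i)) // v0 mxE normr0 mulr0.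
by rewrite u0 v0 vnorm0 mulr0.
Qed.

End Euclidean.

Section OperatorNorm.
Variable R : realType.
Local Open Scope classical_set_scope.

Lemma vnorm_mulmx_le_frobenius m k (M : 'M[R]_(m, k)) (u : 'cV[R]_k) :
  vnorm (M *m u) <= Num.sqrt (\sum_i \sum_j M i j ^+ 2) * vnorm u.
Proof.
rewrite /vnorm -sqrtrM; last by do 2![apply: sumr_ge0 => ? _]; exact: sqr_ge0.
apply: ler_wsqrtr; rewrite big_distrl; apply: ler_sum => i _ /=.
by rewrite mxE; exact: (sum_mul_sqr_le (M i) (u ^~ 0)).
Qed.

Lemma opnorm_ubound m k (M : 'M[R]_(m, k)) :
  has_ubound [set vnorm (M *m v) | v in [set v : 'cV[R]_k | vnorm v <= 1]].
Proof.
exists (Num.sqrt (\sum_i \sum_j M i j ^+ 2)) => _ [v v_le1 <-].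
apply: le_trans (vnorm_mulmx_le_frobenius M v) _.
by rewrite ler_piMr ?sqrtr_ge0.
Qed.

Lemma opnorm_ge0 m k (M : 'M[R]_(m, k)) : 0 <= opnorm M.
Proof.
apply: (ub_le_sup (opnorm_ubound M)); exists 0; last by rewrite mulmx0 vnorm0.
by rewrite /= vnorm0 ler01.
Qed.

Lemma vnorm_mulmx_le m k (M : 'M[R]_(m, k)) (u : 'cV[R]_k) :
  vnorm (M *m u) <= opnorm M * vnorm u.
Proof.
have [/eqP|u_neq0] := eqVneq (vnorm u) 0.
  by rewrite vnorm_eq0 => /eqP->; rewrite mulmx0 !vnorm0 mulr0.
have u_gt0 : 0 < vnorm u by rewrite lt_def u_neq0 vnorm_ge0.
have : vnorm (M *m ((vnorm u)^-1 *: u)) <= opnorm M.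
  apply: (ub_le_sup (opnorm_ubound M)); exists ((vnorm u)^-1 *: u) => //=.
  by rewrite vnormZ ger0_norm ?invr_ge0 ?vnorm_ge0 // mulVf.
rewrite -scalemxAr vnormZ ger0_norm ?invr_ge0 ?vnorm_ge0 //.
by rewrite mulrC ler_pdivrMr // mulrC.
Qed.

Lemma vnorm_trmx_mulmx_le m k (M : 'M[R]_(m, k)) (v : 'cV[R]_m) :
  vnorm (M^T *m v) <= opnorm M * vnorm v.
Proof.
set u := M^T *m v.
have [u0|u_neq0] := eqVneq (vnorm u) 0.
  by rewrite u0 mulr_ge0 ?opnorm_ge0 ?vnorm_ge0.
have u_gt0 : 0 < vnorm u by rewrite lt_def u_neq0 vnorm_ge0.
rewrite -(ler_pM2r u_gt0) -expr2 -dot_self {1}/u dot_trmx.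
apply: le_trans (ler_norm _) _; apply: le_trans (normr_dot_le _ _) _.
by rewrite mulrAC ler_wpM2r ?vnorm_ge0 ?vnorm_mulmx_le.
Qed.

End OperatorNorm.

Section RealCalculus.
Variable R : realType.

Lemma is_derive_line (f : R -> R) (c e D : R) :
  is_derive c (1 : R) f D -> is_derive (0 : R) (1 : R) (fun h : R => f (c + h * e)) (D * e).
Proof.
move=> f_D.
have line_e : is_derive (0 : R) 1 (fun h : R => c + h * e) e.
  have -> : (fun h : R => c + h * e) = cst c + e \*: id.
    by apply/funext => h /=; rewrite mulrC.
  by apply: is_derive_eq; rewrite add0r [_ *: 1]mulr1.
have f_D' : is_derive (c + 0 * e) 1 f D by rewrite mul0r addr0.
by have := is_derive1_comp (g := fun h => c + h * e) f_D' line_e.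
Qed.

Lemma is_derive_sqr (s : R) : is_derive s (1 : R) (fun t : R => t ^+ 2) (2 * s).
Proof.
have -> : (fun t : R => t ^+ 2) = id * id by apply/funext => t; rewrite expr2.
by apply: is_derive_eq; rewrite [s%:A]mulr1 -mulr2n mulr_natl.
Qed.

Lemma is_derive_along d (f : 'cV[R]_d -> R) (w e : 'cV[R]_d) (D : R) :
  is_derive (0 : R) (1 : R) (fun h : R => f (w + h *: e)) D -> is_derive w e f D.
Proof.
have slice : (fun h : R => h^-1 *: ((f \o shift w) (h *: e) - f w)) =
    (fun h : R => h^-1 *: (((fun h => f (w + h *: e)) \o shift 0) (h *: 1) - f (w + 0 *: e))).
  by rewrite funeqE => h /=; rewrite scale0r !addr0 [w + _]addrC [h *: (1 : R)]mulr1.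
move=> [slice_cvg <-]; apply: DeriveDef; first by rewrite /derivable slice.
by rewrite /derive slice.
Qed.

Lemma right_min_derive_ge0 (f : R -> R) (a b D : R) : a < b ->
  (forall t, a < t < b -> f a <= f t) -> is_derive a (1 : R) f D -> 0 <= D.
Proof.
move=> ab f_min [f_drv <-].
rewrite ['D_1 f a]cvg_at_rightE //; apply: limr_ge.
  rewrite -(cvg_at_rightE (fun h : R => h^-1 *: ((f \o shift a) _ - f a))) //.
  apply: cvg_trans f_drv; apply: cvg_app.
  move=> A [e e_gt0 Ae]; exists e => // h he h_gt0; apply: Ae => //.
  exact/lt0r_neq0.
near=> h; apply: mulr_ge0; first by rewrite invr_ge0 ltW //; near: h; exists 1 => /=.
rewrite subr_ge0 [_ *: 1]mulr1 /= addrC; apply: f_min; rewrite ltrDl.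
near: h; exists (b - a) => /=; first by rewrite subr_gt0.
by move=> h + h_gt0; rewrite h_gt0 /= sub0r normrN gtr0_norm // ltrBrDl.
Unshelve. all: by end_near. Qed.

Lemma nondecreasing_derive_ge0 (f : R -> R) (a D : R) :
  {homo f : s t / s <= t} -> is_derive a (1 : R) f D -> 0 <= D.
Proof.
move=> f_mono; apply: (@right_min_derive_ge0 _ a (a + 1)); first by rewrite ltrDl.
by move=> t /andP[a_lt_t _]; apply/f_mono/ltW.
Qed.

Section Convex.
Variables (f df : R -> R).
Hypothesis f_convex : forall a b t, 0 <= t <= 1 ->
  f (t * a + (1 - t) * b) <= t * f a + (1 - t) * f b.
Hypothesis f_derive : forall s, is_derive s (1 : R) f (df s).

Lemma convex_tangent_le a b : f a + df a * (b - a) <= f b.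
Proof.
(* the chord minus the graph over [a, b] is >= 0 and vanishes at a *)
pose gap t := t * (f b - f a) - (f (a + t * (b - a)) - f a).
have gap_D : is_derive (0 : R) (1 : R) gap ((f b - f a) - df a * (b - a)).
  have -> : gap = (f b - f a) \*: id - ((fun t => f (a + t * (b - a))) - cst (f a)).
    by apply/funext => t; rewrite /gap /= mulrC.
  have line_D := is_derive_line (b - a) (f_derive a).
  by apply: is_derive_eq; rewrite [_ *: 1]mulr1 subr0.
suff : 0 <= (f b - f a) - df a * (b - a) by lra.
apply: (right_min_derive_ge0 ltr01 _ gap_D) => t /andP[t_gt0 t_lt1].
have t_range : 0 <= t <= 1 by rewrite !ltW.
rewrite /gap !mul0r addr0 subrr subr0 subr_ge0.
have -> : a + t * (b - a) = t * b + (1 - t) * a by ring.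
by have := f_convex b a t_range; lra.
Qed.

Lemma convex_derive_nondecreasing : {homo df : a b / a <= b}.
Proof.
move=> a b ab; have := convex_tangent_le a b; have := convex_tangent_le b a.
have [-> //|a_neq_b] := eqVneq a b.
have ba_gt0 : 0 < b - a by rewrite subr_gt0 lt_neqAle a_neq_b.
move=> tan_b tan_a; rewrite -subr_ge0 -(pmulr_lge0 _ ba_gt0); lra.
Qed.

End Convex.

Lemma lipschitz_derive_remainder (f df : R -> R) (k a h : R) :
  (forall s, is_derive s (1 : R) f (df s)) ->
  (forall s t, `|df s - df t| <= k * `|s - t|) ->
  `|f (a + h) - f a - df a * h| <= k * h ^+ 2.
Proof.
move=> f_D df_lip.
have k_ge0 : 0 <= k.
  by have := df_lip 1 0; rewrite subr0 normr1 mulr1; apply: le_trans.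
have [c ca_le E] : exists2 c, `|c - a| <= `|h| &
    f (a + h) - f a - df a * h = (df c - df a) * h.
  have f_drv s : derivable f s 1 by case: (f_D s).
  have f_cont p q := derivable_within_continuous (i := `[p, q]%R) (fun s _ => f_drv s).
  have [h_ge0|h_lt0] := leP 0 h.
    have [c] := MVT_segment (ler_wpDr h_ge0 (lexx a)) (fun s _ => f_D s) (f_cont _ _).
    rewrite in_itv /= => /andP[c1 c2] Ec.
    exists c; first by rewrite !ger0_norm ?subr_ge0; lra.
    by rewrite Ec addrAC subrr add0r; ring.
  have aha : a + h <= a by lra.
  have [c] := MVT_segment aha (fun s _ => f_D s) (f_cont _ _).
  rewrite in_itv /= => /andP[c1 c2] Ec.
  exists c; first by rewrite !ler0_norm ?subr_le0; lra.
  by rewrite -[f (a + h) - f a]opprB Ec; ring.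
rewrite E normrM -[h ^+ 2]real_normK ?num_real // expr2 mulrA.
by rewrite ler_wpM2r // (le_trans (df_lip c a)) // ler_wpM2l.
Qed.

End RealCalculus.

Section ScatteringEnergy.
Variables (R : realType) (J : nat).

Lemma sum_tuple_cons (T : finType) l (F : l.+1.-tuple T -> R) :
  \sum_t F t = \sum_(a : T) \sum_(t : l.-tuple T) F [tuple of a :: t].
Proof.
rewrite pair_big /= (reindex (fun p : T * l.-tuple T => [tuple of p.1 :: p.2])) //=.
exists (fun t : l.+1.-tuple T => (thead t, [tuple of behead t])).
  by move=> [a t] _ /=; congr (_, _); apply: val_inj.
by move=> t _; rewrite [RHS]tuple_eta; apply: val_inj.
Qed.

Lemma sum_gdim L (F : seq 'I_J -> R) :
  \sum_(k < gdim J L) F (tval (tagged (enum_val k))) = \sum_(l < L) \sum_(t : l.-tuple 'I_J) F t.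
Proof.
rewrite -(big_enum_val (fun s : pathT J L => F (tval (tagged s)))).
rewrite (sig_big_dep (I := 'I_L) predT (fun _ => predT) (fun l (t : l.-tuple 'I_J) => F t)).
by apply: eq_bigl.
Qed.

Variables (g : nat) (hs : 'I_J -> R -> R) (V : 'M[R]_g) (lam : 'rV[R]_g) (B : R).
Hypothesis frame_ub : forall v : 'cV[R]_g,
  \sum_(j < J) vnorm (wav (hs j) V lam *m v) ^+ 2 <= B ^+ 2 * vnorm v ^+ 2.

Lemma Phi_layer_energy_le l (x : 'cV[R]_g) :
  \sum_(t : l.-tuple 'I_J) vnorm (Phi hs V lam x t) ^+ 2 <= B ^+ (2 * l) * vnorm x ^+ 2.
Proof.
elim: l x => [|l IHl] x.
  rewrite (eq_bigr (fun _ => vnorm x ^+ 2)) => [|t _]; last by rewrite tuple0.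
  by rewrite sumr_const card_tuple expn0 muln0 expr0 mul1r.
rewrite sum_tuple_cons.
apply: (@le_trans _ _ (\sum_j B ^+ (2 * l) *
    vnorm (map_mx (fun r => `|r|) (wav (hs j) V lam *m x)) ^+ 2)).
  by apply: ler_sum => j _; exact: IHl.
rewrite -mulr_sumr; under eq_bigr do rewrite vnorm_map_normr.
rewrite mulnS exprD -mulrA mulrCA.
by apply: ler_wpM2l; [rewrite exprM exprn_ge0 // sqr_ge0 | exact: frame_ub].
Qed.

Lemma phi_sqr_le (x : 'cV[R]_g) (p : seq 'I_J) :
  phi hs V lam x p ^+ 2 <= g%:R^-1 * vnorm (Phi hs V lam x p) ^+ 2.
Proof.
have [g0|g_gt0] := posnP g.
  by rewrite /phi (_ : g%:R^-1 = 0) ?g0 ?invr0 // !mul0r expr0n.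
have gR_gt0 : (0 : R) < g%:R by rewrite ltr0n.
have := sum_mul_sqr_le (fun _ => 1) (Phi hs V lam x p ^~ 0).
have -> : \sum_(i < g) (1 : R) ^+ 2 = g%:R.
  by rewrite (eq_bigr (fun _ => 1)) => [|i _]; rewrite ?expr1n // sumr_const card_ord.
under eq_bigr do rewrite mul1r.
rewrite -vnorm_sqr => CS.
rewrite /phi exprMn -ler_pdivlMl ?exprn_gt0 ?invr_gt0 // -exprVn invrK.
by rewrite [g%:R ^+ 2]expr2 -mulrA mulVKf ?gt_eqF.
Qed.

Lemma vnorm_sqr_le_dim (x : 'cV[R]_g) : (forall j, `|x j 0| <= 1) -> vnorm x ^+ 2 <= g%:R.
Proof.
move=> x_le1; rewrite vnorm_sqr -[g in g%:R]card_ord -sumr_const.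
apply: ler_sum => j _; rewrite -real_normK ?num_real // expr2.
exact: mulr_ile1.
Qed.

Lemma vnorm_gst_le L (x : 'cV[R]_g) : (forall j, `|x j 0| <= 1) ->
  vnorm (gst L hs V lam x) <= Num.sqrt (\sum_(l < L) B ^+ (2 * l)).
Proof.
move=> x_le1; apply: ler_wsqrtr.
under eq_bigr do rewrite mxE.
rewrite (sum_gdim L (fun p => phi hs V lam x p ^+ 2)); apply: ler_sum => l _.
apply: (@le_trans _ _ (\sum_(t : l.-tuple 'I_J) g%:R^-1 * vnorm (Phi hs V lam x t) ^+ 2)).
  by apply: ler_sum => t _; exact: phi_sqr_le.
rewrite -mulr_sumr; apply: le_trans (ler_wpM2l _ (Phi_layer_energy_le l x)) _.
  by rewrite invr_ge0.
have x_energy : g%:R^-1 * vnorm x ^+ 2 <= 1.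
  have [g0|g_gt0] := posnP g; first by rewrite (_ : g%:R^-1 = 0) ?g0 ?invr0 ?mul0r.
  by rewrite ler_pdivrMl ?ltr0n // mulr1 vnorm_sqr_le_dim.
by rewrite mulrCA ler_piMr // exprM exprn_ge0 // sqr_ge0.
Qed.

End ScatteringEnergy.

Section Quadratic.
Variable R : realType.

Lemma dot_suml m I (r : seq I) (P : pred I) (F : I -> 'cV[R]_m) (v : 'cV[R]_m) :
  dot (\sum_(i <- r | P i) F i) v = \sum_(i <- r | P i) dot (F i) v.
Proof.
elim/big_rec2: _ => [|i a u _ <-]; last by rewrite dotDl.
by rewrite /dot big1 // => k _; rewrite mxE mul0r.
Qed.

Lemma outer_mulmx m (u v : 'cV[R]_m) : u *m u^T *m v = dot v u *: u.
Proof.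
apply/matrixP => i j; rewrite (ord1 j) -mulmxA !mxE big_ord1 mxE mulrC /dot.
by congr (_ * _); apply: eq_bigr => k _; rewrite !mxE mulrC.
Qed.

Lemma posdef_unitmx m (A : 'M[R]_m) :
  (forall u : 'cV[R]_m, u != 0 -> 0 < dot u (A *m u)) -> A \in unitmx.
Proof.
move=> A_pos; rewrite -unitmx_tr -row_free_unit; apply: inj_row_free => v vA0.
apply/eqP; apply: contraT => v_neq0.
have AvT0 : A *m v^T = 0 by rewrite -[A]trmxK -trmx_mul vA0 trmx0.
have := A_pos v^T; rewrite -trmx0 (can_eq trmxK) AvT0 => /(_ v_neq0).
by rewrite /dot big1 ?ltxx // => k _; rewrite !mxE mulr0.
Qed.

Variables (n d : nat) (z : 'I_n -> 'cV[R]_d).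

Lemma datamx_mulmx (v : 'cV[R]_d) i : (datamx z *m v) i 0 = dot v (z i).
Proof. by rewrite mxE; apply: eq_bigr => k _; rewrite mxE mulrC. Qed.

Lemma trmx_datamx_mulmx (r : 'cV[R]_n) : (datamx z)^T *m r = \sum_i r i 0 *: z i.
Proof.
apply/matrixP => k j; rewrite (ord1 j) !mxE summxE.
by apply: eq_bigr => i _; rewrite !mxE mulrC.
Qed.

End Quadratic.

Section LossDerivatives.
Variables (R : realType) (Y : Type) (n d : nat) (l dl ddl : R -> Y -> R) (lambda : R).
Variables (z : 'I_n -> 'cV[R]_d) (y : 'I_n -> Y).
Hypothesis l_derive : forall yy s, is_derive s (1 : R) (fun t => l t yy) (dl s yy).
Hypothesis dl_derive : forall yy s, is_derive s (1 : R) (fun t => dl t yy) (ddl s yy).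
Hypothesis l_convex : forall yy a b t, 0 <= t <= 1 ->
  l (t * a + (1 - t) * b) yy <= t * l a yy + (1 - t) * l b yy.
Hypothesis lambda_gt0 : 0 < lambda.

Definition loss_grad (w : 'cV[R]_d) : 'cV[R]_d :=
  \sum_i dl (dot w (z i)) (y i) *: z i + (n%:R * lambda) *: w.

Definition loss_hess (w : 'cV[R]_d) : 'M[R]_d :=
  \sum_i ddl (dot w (z i)) (y i) *: (z i *m (z i)^T) + (n%:R * lambda)%:M.

Lemma dot_loss_grad w e :
  dot (loss_grad w) e = \sum_i dl (dot w (z i)) (y i) * dot (z i) e + n%:R * lambda * dot w e.
Proof.
by rewrite dotDl dotZl dot_suml; congr (_ + _); apply: eq_bigr => i _; rewrite dotZl.
Qed.

Lemma is_derive_Loss_line w e :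
  is_derive (0 : R) (1 : R) (fun h : R => Loss l lambda z y (w + h *: e)) (dot (loss_grad w) e).
Proof.
have -> : (fun h : R => Loss l lambda z y (w + h *: e)) =
    \sum_i ((fun h : R => l (dot w (z i) + h * dot e (z i)) (y i)) +
      (lambda / 2) \*: \sum_k (fun h : R => (w k 0 + h * e k 0) ^+ 2)).
  apply/funext => h; rewrite fct_sumE; apply: eq_bigr => i _ /=.
  rewrite fct_sumE dotDl dotZl vnorm_sqr; congr (_ + _ * _); apply: eq_bigr => k _.
  by rewrite !mxE.
have slice_D := is_derive_sum (fun i => is_deriveD
  (is_derive_line (dot e (z i)) (l_derive (y i) (dot w (z i))))
  (is_deriveZ (lambda / 2)
    (is_derive_sum (fun k => is_derive_line (e k 0) (is_derive_sqr (w k 0)))))).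
apply: is_derive_eq slice_D _.
rewrite dot_loss_grad big_split /=; congr (_ + _).
  by apply: eq_bigr => i _; rewrite [dot e _]dotC.
have scaleE (a b : R) : a *: b = a * b by [].
rewrite sumr_const card_ord -[_ *+ n]mulr_natl -mulrA scaleE; congr (_ * _).
by rewrite /dot !mulr_sumr; apply: eq_bigr => k _; field.
Qed.

Lemma is_derive_Loss w e : is_derive w e (Loss l lambda z y) (dot (loss_grad w) e).
Proof. exact/is_derive_along/is_derive_Loss_line. Qed.

Lemma grad_Loss w : grad (Loss l lambda z y) w = loss_grad w.
Proof.
apply/matrixP => k j; rewrite (ord1 j) mxE.
by rewrite (derive_val (is_derive := is_derive_Loss w (delta_mx k 0))) dotC dot_delta.
Qed.

Lemma loss_grad_eq0_of_min w :
  (forall u, Loss l lambda z y w <= Loss l lambda z y u) -> loss_grad w = 0.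
Proof.
move=> w_min; apply/eqP; rewrite -vnorm_eq0 -sqrf_eq0 -dot_self eq_le.
have := right_min_derive_ge0 ltr01 _ (is_derive_Loss_line w (- loss_grad w)).
rewrite dotC -scaleN1r dotZl mulN1r oppr_ge0 => -> //.
  by rewrite dot_self sqr_ge0.
by move=> t _; rewrite scale0r addr0.
Qed.

Lemma loss_hess_mulmx w v : loss_hess w *m v =
  \sum_i (ddl (dot w (z i)) (y i) * dot v (z i)) *: z i + (n%:R * lambda) *: v.
Proof.
rewrite mulmxDl mulmx_suml mul_scalar_mx; congr (_ + _); apply: eq_bigr => i _.
by rewrite -scalemxAl outer_mulmx scalerA.
Qed.

Lemma trmx_loss_hess w : (loss_hess w)^T = loss_hess w.
Proof.
rewrite /loss_hess raddfD /= tr_scalar_mx raddf_sum /=; congr (_ + _).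
by apply: eq_bigr => i _; rewrite linearZ /= trmx_mul trmxK.
Qed.

Lemma is_derive_loss_grad_line w e k : is_derive (0 : R) (1 : R)
  (fun h : R => loss_grad (w + h *: e) k 0) ((loss_hess w *m e) k 0).
Proof.
have -> : (fun h : R => loss_grad (w + h *: e) k 0) =
    \sum_i (z i k 0 \*: (fun h : R => dl (dot w (z i) + h * dot e (z i)) (y i))) +
    (n%:R * lambda) \*: (fun h : R => w k 0 + h * e k 0).
  apply/funext => h; rewrite !mxE summxE !fctE fct_sumE; congr (_ + _).
  by apply: eq_bigr => i _; rewrite mxE dotDl dotZl mulrC.
have slice_D := is_deriveD
  (is_derive_sum (fun i => is_deriveZ (z i k 0)
    (is_derive_line (dot e (z i)) (dl_derive (y i) (dot w (z i))))))
  (is_deriveZ (n%:R * lambda) (is_derive_line (e k 0) (@is_derive_id _ R (w k 0) 1))).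
apply: is_derive_eq slice_D _.
rewrite loss_hess_mulmx !mxE summxE; congr (_ + _); last by rewrite mul1r.
by apply: eq_bigr => i _; rewrite [RHS]mxE [RHS]mulrC.
Qed.

Lemma hess_Loss w : hess (Loss l lambda z y) w = loss_hess w.
Proof.
apply/matrixP => k m; rewrite mxE.
have -> : (fun u => derive (Loss l lambda z y) u (delta_mx m 0)) = (fun u => loss_grad u m 0).
  apply/funext => u.
  by rewrite (derive_val (is_derive := is_derive_Loss u (delta_mx m 0))) dotC dot_delta.
have grad_D := is_derive_loss_grad_line w (delta_mx k 0) m.
rewrite (derive_val (is_derive := is_derive_along (f := fun u => loss_grad u m 0) grad_D)).
by rewrite -colE mxE -[in LHS]trmx_loss_hess mxE.
Qed.

Lemma ddl_ge0 yy s : 0 <= ddl s yy.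
Proof.
apply: (nondecreasing_derive_ge0 _ (dl_derive yy s)).
exact: (convex_derive_nondecreasing (l_convex yy) (l_derive yy)).
Qed.

Lemma loss_hess_unitmx w : (0 < n)%N -> loss_hess w \in unitmx.
Proof.
move=> n_gt0; apply: posdef_unitmx => u u_neq0.
rewrite dotC loss_hess_mulmx dotDl dotZl dot_suml dot_self.
apply: ltr_wpDl.
  apply: sumr_ge0 => i _.
  by rewrite dotZl [dot (z i) u]dotC -mulrA -expr2 mulr_ge0 ?ddl_ge0 ?sqr_ge0.
have u_gt0 : 0 < vnorm u by rewrite lt_def vnorm_eq0 u_neq0 vnorm_ge0.
by rewrite !mulr_gt0 ?ltr0n // expr2 mulr_gt0.
Qed.

Lemma loss_hess_newton_step w :
  loss_hess w *m (invmx (loss_hess w) *m loss_grad w) = loss_grad w.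
Proof.
have [n0|n_gt0] := posnP n; last by rewrite mulKVmx // loss_hess_unitmx.
(* with no data the Hessian vanishes, but so does the gradient *)
have -> : loss_grad w = 0.
  rewrite /loss_grad big1 => [|[i i_lt_n] _]; last by exfalso; rewrite n0 in i_lt_n.
  by rewrite (_ : n%:R = 0) ?mul0r ?scale0r ?addr0 // n0.
by rewrite !mulmx0.
Qed.

Definition loss_remainder (w v : 'cV[R]_d) : 'cV[R]_n :=
  \col_i (dl (dot w (z i) + dot v (z i)) (y i) - dl (dot w (z i)) (y i)
           - ddl (dot w (z i)) (y i) * dot v (z i)).

Lemma loss_grad_taylor w v : loss_grad (w + v) =
  loss_grad w + loss_hess w *m v + (datamx z)^T *m loss_remainder w v.
Proof.
rewrite loss_hess_mulmx trmx_datamx_mulmx /loss_grad.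
have -> : \sum_i dl (dot (w + v) (z i)) (y i) *: z i =
    \sum_i dl (dot w (z i)) (y i) *: z i +
    \sum_i (ddl (dot w (z i)) (y i) * dot v (z i)) *: z i +
    \sum_i loss_remainder w v i 0 *: z i.
  rewrite -!big_split /=; apply: eq_bigr => i _.
  by rewrite mxE dotDl -!scalerDl; congr (_ *: _); ring.
by rewrite scalerDr addrAC addrACA.
Qed.

Lemma vnorm_loss_remainder_le w v (gamma K : R) :
  (forall i s t, `|ddl s (y i) - ddl t (y i)| <= gamma * `|s - t|) ->
  (forall i, vnorm (z i) <= K) ->
  vnorm (loss_remainder w v) <= gamma * K * vnorm v * vnorm (datamx z *m v).
Proof.
move=> ddl_lip z_le; apply: vnorm_le_pointwise => i.
rewrite mxE datamx_mulmx; set h := dot v (z i).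
have gamma_ge0 : 0 <= gamma.
  by have := ddl_lip i 1 0; rewrite subr0 normr1 mulr1; apply: le_trans.
apply: le_trans (lipschitz_derive_remainder (dot w (z i)) h (dl_derive (y i)) (ddl_lip i)) _.
rewrite -!mulrA; apply: ler_wpM2l => //.
rewrite -real_normK ?num_real // expr2 mulrA; apply: ler_wpM2r => //.
apply: le_trans (normr_dot_le _ _) _.
by rewrite mulrC ler_wpM2r ?vnorm_ge0.
Qed.

Lemma vnorm_loss_grad_newton_le w v (gamma K : R) :
  (forall i s t, `|ddl s (y i) - ddl t (y i)| <= gamma * `|s - t|) ->
  (forall i, vnorm (z i) <= K) ->
  loss_hess w *m v = - loss_grad w ->
  vnorm (loss_grad (w + v)) <= gamma * K * opnorm (datamx z) * vnorm v * vnorm (datamx z *m v).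
Proof.
move=> ddl_lip z_le newton; rewrite loss_grad_taylor newton addrN add0r.
apply: le_trans (vnorm_trmx_mulmx_le _ _) _.
have -> : gamma * K * opnorm (datamx z) * vnorm v * vnorm (datamx z *m v) =
    opnorm (datamx z) * (gamma * K * vnorm v * vnorm (datamx z *m v)) by ring.
by rewrite ler_wpM2l ?opnorm_ge0 ?vnorm_loss_remainder_le.
Qed.

End LossDerivatives.

Unset Implicit Arguments.

Theorem theorem4p6
  (R : realType) (Y : Type)
  (* GST parameters *)
  (J L : nat) (hs : 'I_J -> R -> R) (A B : R)
  (* training graphs *)
  (n : nat) (g : 'I_n -> nat)
  (S : forall i, 'M[R]_(g i)) (x : forall i, 'cV[R]_(g i)) (y : 'I_n -> Y)
  (* removal requests: fr i = nodes of G_i whose feature is removed,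
     nr i = nodes of G_i removed entirely *)
  (fr nr : forall i, {set 'I_(g i)})
  (* eigendecompositions of the shift operators before and after removal *)
  (V : forall i, 'M[R]_(g i)) (lam : forall i, 'rV[R]_(g i))
  (V' : forall i, 'M[R]_(g i)) (lam' : forall i, 'rV[R]_(g i))
  (* loss and its derivatives in s *)
  (l dl ddl : R -> Y -> R) (lambda C1 C2 gamma1 gamma2 : R)
  (wstar : 'cV[R]_(gdim J L)) :
  let S' := fun i => remove_S (nr i) (S i) in
  let x' := fun i => remove_x (fr i) (nr i) (x i) in
  let z  := fun i => gst L hs (V i) (lam i) (x i) in
  let z' := fun i => gst L hs (V' i) (lam' i) (x' i) in
  let Z' := datamx z' in
  (0 < J)%N -> (0 < L)%N ->
  (forall i, (S i)^T = S i) ->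
  (forall i, spec_decomp (S i) (V i) (lam i)) ->
  (forall i, spec_decomp (S' i) (V' i) (lam' i)) ->
  0 < A -> A <= B ->
  (forall i (v : 'cV[R]_(g i)),
      A ^+ 2 * vnorm v ^+ 2
        <= \sum_(j < J) vnorm (wav (hs j) (V i) (lam i) *m v) ^+ 2
      /\ \sum_(j < J) vnorm (wav (hs j) (V i) (lam i) *m v) ^+ 2
        <= B ^+ 2 * vnorm v ^+ 2) ->
  (forall i (v : 'cV[R]_(g i)),
      A ^+ 2 * vnorm v ^+ 2
        <= \sum_(j < J) vnorm (wav (hs j) (V' i) (lam' i) *m v) ^+ 2
      /\ \sum_(j < J) vnorm (wav (hs j) (V' i) (lam' i) *m v) ^+ 2
        <= B ^+ 2 * vnorm v ^+ 2) ->
  (* l(., y) convex and twice differentiable, with derivatives dl, ddl *)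
  (forall yy (a b t : R), 0 <= t <= 1 ->
      l (t * a + (1 - t) * b) yy <= t * l a yy + (1 - t) * l b yy) ->
  (forall yy (s : R), is_derive s 1 (fun t => l t yy) (dl s yy)) ->
  (forall yy (s : R), is_derive s 1 (fun t => dl t yy) (ddl s yy)) ->
  0 < lambda ->
  (* standing assumptions (1)-(5) *)
  (forall i w, vnorm (grad (fun u => l (dot u (z i)) (y i)) w) <= C1 /\
               vnorm (grad (fun u => l (dot u (z' i)) (y i)) w) <= C1) ->
  (forall i w, `|dl (dot w (z i)) (y i)| <= C2 /\
               `|dl (dot w (z' i)) (y i)| <= C2) ->
  (forall i (a b : R), `|dl a (y i) - dl b (y i)| <= gamma1 * `|a - b|) ->
  (forall i (a b : R), `|ddl a (y i) - ddl b (y i)| <= gamma2 * `|a - b|) ->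
  (forall i j, `|x i j 0| <= 1 /\ `|x' i j 0| <= 1) ->
  (* w* minimizes L(., D) *)
  (forall w, Loss l lambda z y wstar <= Loss l lambda z y w) ->
  let Hw := hess (Loss l lambda z' y) wstar in
  let Delta := grad (Loss l lambda z y) wstar - grad (Loss l lambda z' y) wstar in
  let v := invmx Hw *m Delta in
  let w' := wstar + v in
  let F := Num.sqrt (\sum_(k < L) B ^+ (2 * k)) in
  vnorm (grad (Loss l lambda z' y) w')
    <= gamma2 * F * opnorm Z' * vnorm v * vnorm (Z' *m v).
Proof.
move=> S' x' z z' Z' _ _ _ _ _ _ _ _ frame' l_convex l_derive dl_derive lambda_gt0 _ _ _
  ddl_lip x_le1 wstar_min; cbv zeta.
rewrite !grad_Loss // hess_Loss // (loss_grad_eq0_of_min l_derive wstar_min) sub0r.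
apply: (vnorm_loss_grad_newton_le dl_derive ddl_lip) => [i|].
  by have := vnorm_gst_le (fun u => (frame' i u).2) L (fun j => (x_le1 i j).2).
by rewrite !mulmxN (loss_hess_newton_step _ _ l_derive dl_derive l_convex lambda_gt0).
Qed.
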